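(* For any prefix $p$ and stream type $s$, there is at most one stream type $s'$ such that $\delta_p s \sim s'$. If moreover $p : s$, then such an $s'$ exists.
   Context: Stream types are generated by $s,t ::= 1 \mid \varepsilon \mid s\cdot t \mid s\,\|\,t \mid s+t \mid s^\star$. Prefixes are generated by $p ::= \mathtt{oneEmp} \mid \mathtt{oneFull} \mid \mathtt{epsEmp} \mid \mathtt{par}(p,p') \mid \mathtt{catA}(p) \mid \mathtt{catB}(p,p') \mid \mathtt{sumEmp} \mid \mathtt{inl}(p) \mid \mathtt{inr}(p) \mid \mathtt{starEmp} \mid \mathtt{starDone} \mid \mathtt{stA}(p) \mid \mathtt{stB}(p,p')$. Maximality (inductive): $\mathtt{epsEmp}$, $\mathtt{oneFull}$, $\mathtt{starDone}$ are maximal; $\mathtt{par}(p_1,p_2)$, $\mathtt{catB}(p_1,p_2)$, $\mathtt{stB}(p_1,p_2)$ are maximal if $p_1$ and $p_2$ are; $\mathtt{inl}(p)$, $\mathtt{inr}(p)$ are maximal if $p$ is. Prefix typing $p : s$ (inductive): $\mathtt{epsEmp}:\varepsilon$; $\mathtt{oneEmp}:1$; $\mathtt{oneFull}:1$; $\mathtt{par}(p_1,p_2): s\|t$ if $p_1:s$, $p_2:t$; $\mathtt{catA}(p): s\cdot t$ if $p:s$; $\mathtt{catB}(p_1,p_2): s\cdot t$ if $p_1:s$, $p_1$ maximal, $p_2:t$; $\mathtt{sumEmp}: s+t$; $\mathtt{inl}(p):s+t$ if $p:s$; $\mathtt{inr}(p):s+t$ if $p:t$; $\mathtt{starEmp}:s^\star$;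 $\mathtt{starDone}:s^\star$; $\mathtt{stA}(p):s^\star$ if $p:s$; $\mathtt{stB}(p,p'):s^\star$ if $p:s$, $p$ maximal, $p':s^\star$. The derivative relation $\delta_p s \sim s'$ is defined inductively by: $\delta_{\mathtt{epsEmp}}\varepsilon\sim\varepsilon$; $\delta_{\mathtt{oneEmp}}1\sim 1$; $\delta_{\mathtt{oneFull}}1\sim\varepsilon$; $\delta_{\mathtt{par}(p_1,p_2)}(s\|t)\sim s'\|t'$ if $\delta_{p_1}s\sim s'$ and $\delta_{p_2}t\sim t'$; $\delta_{\mathtt{catA}(p)}(s\cdot t)\sim s'\cdot t$ if $\delta_p s\sim s'$; $\delta_{\mathtt{catB}(p_1,p_2)}(s\cdot t)\sim t'$ if $\delta_{p_2}t\sim t'$; $\delta_{\mathtt{sumEmp}}(s+t)\sim s+t$; $\delta_{\mathtt{inl}(p)}(s+t)\sim s'$ if $\delta_p s\sim s'$; $\delta_{\mathtt{inr}(p)}(s+t)\sim t'$ if $\delta_p t\sim t'$; $\delta_{\mathtt{starEmp}}s^\star\sim s^\star$; $\delta_{\mathtt{starDone}}s^\star\sim\varepsilon$; $\delta_{\mathtt{stA}(p)}s^\star\sim s'\cdot s^\star$ if $\delta_p s\sim s'$; $\delta_{\mathtt{stB}(p,p')}s^\star\sim s'$ if $\delta_{p'}s^\star\sim s'$. *)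

Inductive ty : Type :=
  | TOne : ty
  | TEps : ty
  | TCat : ty -> ty -> ty
  | TPar : ty -> ty -> ty
  | TSum : ty -> ty -> ty
  | TStar : ty -> ty.

Inductive prefix : Type :=
  | OneEmp : prefix
  | OneFull : prefix
  | EpsEmp : prefix
  | Par : prefix -> prefix -> prefix
  | CatA : prefix -> prefix
  | CatB : prefix -> prefix -> prefix
  | SumEmp : prefix
  | Inl : prefix -> prefix
  | Inr : prefix -> prefix
  | StarEmp : prefix
  | StarDone : prefix
  | StA : prefix -> prefix
  | StB : prefix -> prefix -> prefix.

Inductive maximal : prefix -> Prop :=
  | MaxEpsEmp : maximal EpsEmp
  | MaxOneFull : maximal OneFull
  | MaxStarDone : maximal StarDone
  | MaxPar : forall p1 p2, maximal p1 -> maximal p2 -> maximal (Par p1 p2)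
  | MaxCatB : forall p1 p2, maximal p1 -> maximal p2 -> maximal (CatB p1 p2)
  | MaxStB : forall p1 p2, maximal p1 -> maximal p2 -> maximal (StB p1 p2)
  | MaxInl : forall p, maximal p -> maximal (Inl p)
  | MaxInr : forall p, maximal p -> maximal (Inr p).

Inductive has_type : prefix -> ty -> Prop :=
  | TyEpsEmp : has_type EpsEmp TEps
  | TyOneEmp : has_type OneEmp TOne
  | TyOneFull : has_type OneFull TOne
  | TyPar : forall p1 p2 s t, has_type p1 s -> has_type p2 t ->
      has_type (Par p1 p2) (TPar s t)
  | TyCatA : forall p s t, has_type p s -> has_type (CatA p) (TCat s t)
  | TyCatB : forall p1 p2 s t, has_type p1 s -> maximal p1 -> has_type p2 t ->
      has_type (CatB p1 p2) (TCat s t)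
  | TySumEmp : forall s t, has_type SumEmp (TSum s t)
  | TyInl : forall p s t, has_type p s -> has_type (Inl p) (TSum s t)
  | TyInr : forall p s t, has_type p t -> has_type (Inr p) (TSum s t)
  | TyStarEmp : forall s, has_type StarEmp (TStar s)
  | TyStarDone : forall s, has_type StarDone (TStar s)
  | TyStA : forall p s, has_type p s -> has_type (StA p) (TStar s)
  | TyStB : forall p p' s, has_type p s -> maximal p ->
      has_type p' (TStar s) -> has_type (StB p p') (TStar s).

(* deriv p s s'  means  delta_p s ~ s' *)
Inductive deriv : prefix -> ty -> ty -> Prop :=
  | DEpsEmp : deriv EpsEmp TEps TEps
  | DOneEmp : deriv OneEmp TOne TOne
  | DOneFull : deriv OneFull TOne TEps
  | DPar : forall p1 p2 s t s' t', deriv p1 s s' -> deriv p2 t t' ->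
      deriv (Par p1 p2) (TPar s t) (TPar s' t')
  | DCatA : forall p s t s', deriv p s s' -> deriv (CatA p) (TCat s t) (TCat s' t)
  | DCatB : forall p1 p2 s t t', deriv p2 t t' -> deriv (CatB p1 p2) (TCat s t) t'
  | DSumEmp : forall s t, deriv SumEmp (TSum s t) (TSum s t)
  | DInl : forall p s t s', deriv p s s' -> deriv (Inl p) (TSum s t) s'
  | DInr : forall p s t t', deriv p t t' -> deriv (Inr p) (TSum s t) t'
  | DStarEmp : forall s, deriv StarEmp (TStar s) (TStar s)
  | DStarDone : forall s, deriv StarDone (TStar s) TEps
  | DStA : forall p s s', deriv p s s' -> deriv (StA p) (TStar s) (TCat s' (TStar s))
  | DStB : forall p p' s s', deriv p' (TStar s) s' -> deriv (StB p p') (TStar s) s'.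


Lemma deriv_functional (p : prefix) (s s1 s2 : ty) :
  deriv p s s1 -> deriv p s s2 -> s1 = s2.
Proof.
  intros H1; revert s2.
  induction H1; intros s2 H2; inversion H2; subst; f_equal; auto.
Qed.

Lemma has_type_deriv (p : prefix) (s : ty) :
  has_type p s -> exists s', deriv p s s'.
Proof.
  induction 1;
    repeat match goal with H : exists _, _ |- _ => destruct H end;
    eexists; econstructor; eauto.
Qed.

Theorem mainTheorem2 :
  (forall (p : prefix) (s s1 s2 : ty), deriv p s s1 -> deriv p s s2 -> s1 = s2) /\
  (forall (p : prefix) (s : ty), has_type p s -> exists s', deriv p s s').
Proof.
  split.
  - exact deriv_functional.
  - exact has_type_deriv.
Qed.
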